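(* Let $a>0$, let $q$ be a continuous complex-valued function on $[-a,a]$, and let $f,g\in C^{2}(-a,a)\cap C^{1}[-a,a]$ be two solutions of $y''-qy=0$ on $(-a,a)$ which do not vanish anywhere on $[-a,a]$ and are normalized by $f(0)=g(0)=1$. Put $h_f=f'(0)$ and $h_g=g'(0)$, and let $\{\varphi_k^f\}_{k\ge0}$ and $\{\varphi_k^g\}_{k\ge0}$ be the systems of recursive integrals built from $f$ and $g$ respectively (as described in the context, with initial point $x_0=0$). Then \[ \varphi_k^f=\varphi_k^g \quad\text{for every odd } k\in\mathbb{N}, \] and \[ \varphi_k^f=\varphi_k^g+\frac{h_f-h_g}{k+1}\,\varphi_{k+1}^g\quad\text{for every even } k\in\mathbb{N}_0=\{0,1,2,\dots\}. \]
   Context: For a function $F\in C^{2}(-a,a)\cap C^{1}[-a,a]$ not vanishing on $[-a,a]$, define recursively on $[-a,a]$ (with initial point $x_0=0$) \[ X^{(0)}\equiv1,\quad X^{(n)}(x)=n\int_{0}^{x}X^{(n-1)}(s)\,\big(F^{2}(s)\big)^{(-1)^{n}}\,ds,\qquad \widetilde X^{(0)}\equiv1,\quad \widetilde X^{(n)}(x)=n\int_{0}^{x}\widetilde X^{(n-1)}(s)\,\big(F^{2}(s)\big)^{(-1)^{n-1}}\,ds, \] for $n=1,2,\dots$, and set $\varphi_k^F=F\,X^{(k)}$ for $k$ odd and $\varphi_k^F=F\,\widetilde X^{(k)}$ for $k$ even (including $k=0$). *)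

From Stdlib Require Import Reals.
From Coquelicot Require Export Coquelicot.
Open Scope R_scope.

Definition Icc (a x : R) : Prop := - a <= x <= a.
Definition Ioo (a x : R) : Prop := - a < x < a.

Definition cont_on_Icc (a : R) (F : R -> C) : Prop :=
  forall x, Icc a x ->
    filterlim F (within (Icc a) (locally x)) (locally (F x)).

(* F in C^2(-a,a) ∩ C^1[-a,a], with F1 = F' and F2 = F'' :
   F and F' are continuous on the closed interval [-a,a] (F' being the
   continuous extension of the derivative), F' is the derivative of F
   on (-a,a), F'' is the derivative of F' on (-a,a) and F'' is continuous
   on (-a,a). *)
Definition C2_C1 (a : R) (F F1 F2 : R -> C) : Prop :=
  cont_on_Icc a F /\ cont_on_Icc a F1 /\
  (forall x, Ioo a x -> is_derive F x (F1 x)) /\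
  (forall x, Ioo a x -> is_derive F1 x (F2 x)) /\
  (forall x, Ioo a x -> continuous F2 x).

Definition wpow (F : R -> C) (n : nat) (s : R) : C :=
  if Nat.even n then Cmult (F s) (F s) else Cinv (Cmult (F s) (F s)).

(* X^{(n)} (tilde = false) and \tilde X^{(n)} (tilde = true), initial point 0:
   X^{(n)}(x) = n ∫_0^x X^{(n-1)}(s) (F^2(s))^{(-1)^n} ds,
   \tilde X^{(n)}(x) = n ∫_0^x \tilde X^{(n-1)}(s) (F^2(s))^{(-1)^{n-1}} ds. *)
Fixpoint Xrec (F : R -> C) (tilde : bool) (n : nat) : R -> C :=
  match n with
  | O => fun _ => RtoC 1
  | S m => fun x =>
      Cmult (RtoC (INR (S m)))
        (RInt (V := C_R_CompleteNormedModule)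
           (fun s => Cmult (Xrec F tilde m s)
                           (wpow F (if tilde then m else S m) s)) 0 x)
  end.

(* phi_k^F = F X^{(k)} for k odd, F \tilde X^{(k)} for k even *)
Definition phi (F : R -> C) (k : nat) (x : R) : C :=
  Cmult (F x) (Xrec F (Nat.even k) k x).

From Stdlib Require Import Reals Lra.
From Coquelicot Require Import Coquelicot.
Open Scope R_scope.

(** Since [f] and [g] solve the same equation, their Wronskian [f' g - f g'] is constant,
    equal to [c = h_f - h_g], so reduction of order gives [f = g u] with
    [u = 1 + c \int_0^x g^{-2}] and [u' = c g^{-2}].  Substituting [f^2 = g^2 u^2] into
    the recursion, every recursive integral of [f] is an explicit combination of those of
    [g] divided or multiplied by [u]: for each [n] both sides vanish at [0] and have the
    same derivative, given the corresponding formula at [n - 1].  Multiplying the formula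
    for [X] by [f = g u] cancels [u] and yields the two identities. *)

(** * Calculus of complex-valued functions of a real variable *)

Lemma is_derive_C_parts (fr fi : R -> R) x dr di :
  is_derive fr x dr -> is_derive fi x di ->
  is_derive (fun t => (fr t, fi t) : C) x ((dr, di) : C).
Proof.
  intros Hr Hi. unfold is_derive in *. eapply filterdiff_ext_lin.
  - apply (filterdiff_comp'_2 fr fi (fun u v => (u, v) : C) x _ _
             (fun u v => (u, v) : C) Hr Hi).
    apply (filterdiff_linear (V := C_R_NormedModule)
             (fun t : prod_NormedModule R_AbsRing R_NormedModule R_NormedModule =>
                (fst t, snd t) : C)).
    apply (is_linear_ext (V := C_R_NormedModule) (fun t => t)).
    + intros [u v]; reflexivity.
    + exact (@is_linear_id R_AbsRing C_R_NormedModule).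
  - intros y; reflexivity.
Qed.

Lemma is_derive_Re (f : R -> C) x l :
  is_derive (V := C_R_NormedModule) f x l -> is_derive (fun t => Re (f t)) x (Re l).
Proof.
  intros H. unfold is_derive, Re in *. eapply filterdiff_ext_lin.
  - eapply filterdiff_comp. apply H.
    apply (filterdiff_linear (U := C_R_NormedModule) (V := R_NormedModule) fst).
    exact (@is_linear_fst R_AbsRing R_NormedModule R_NormedModule).
  - intros y; reflexivity.
Qed.

Lemma is_derive_Im (f : R -> C) x l :
  is_derive (V := C_R_NormedModule) f x l -> is_derive (fun t => Im (f t)) x (Im l).
Proof.
  intros H. unfold is_derive, Im in *. eapply filterdiff_ext_lin.
  - eapply filterdiff_comp. apply H.
    apply (filterdiff_linear (U := C_R_NormedModule) (V := R_NormedModule) snd).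
    exact (@is_linear_snd R_AbsRing R_NormedModule R_NormedModule).
  - intros y; reflexivity.
Qed.

Lemma is_derive_Cmult (f g : R -> C) x df dg :
  is_derive f x df -> is_derive g x dg ->
  is_derive (fun t => Cmult (f t) (g t)) x (Cplus (Cmult df (g x)) (Cmult (f x) dg)).
Proof.
  intros Hf Hg.
  pose proof (is_derive_Re _ _ _ Hf). pose proof (is_derive_Im _ _ _ Hf).
  pose proof (is_derive_Re _ _ _ Hg). pose proof (is_derive_Im _ _ _ Hg).
  replace (Cplus (Cmult df (g x)) (Cmult (f x) dg)) with
    ((Re df * Re (g x) + Re (f x) * Re dg - (Im df * Im (g x) + Im (f x) * Im dg),
      Re df * Im (g x) + Re (f x) * Im dg + (Im df * Re (g x) + Im (f x) * Re dg)) : C).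
  2: { destruct df, dg, (f x), (g x); unfold Cplus, Cmult; simpl; f_equal; ring. }
  apply (is_derive_ext (fun t => (Re (f t) * Re (g t) - Im (f t) * Im (g t),
                                  Re (f t) * Im (g t) + Im (f t) * Re (g t)) : C)).
  { intros t; reflexivity. }
  apply is_derive_C_parts.
  - apply (is_derive_minus (fun t => Re (f t) * Re (g t)) (fun t => Im (f t) * Im (g t))).
    + apply (is_derive_mult (K := R_AbsRing) (fun t => Re (f t)) (fun t => Re (g t)));
        auto using Rmult_comm.
    + apply (is_derive_mult (K := R_AbsRing) (fun t => Im (f t)) (fun t => Im (g t)));
        auto using Rmult_comm.
  - apply (is_derive_plus (fun t => Re (f t) * Im (g t)) (fun t => Im (f t) * Re (g t))).
    + apply (is_derive_mult (K := R_AbsRing) (fun t => Re (f t)) (fun t => Im (g t)));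
        auto using Rmult_comm.
    + apply (is_derive_mult (K := R_AbsRing) (fun t => Im (f t)) (fun t => Re (g t)));
        auto using Rmult_comm.
Qed.

Lemma Cnorm2_neq_0 (z : C) : z <> RtoC 0 -> Re z ^ 2 + Im z ^ 2 <> 0.
Proof. intros Hz E. apply Cmod_gt_0 in Hz. unfold Cmod, Re, Im in *. rewrite E, sqrt_0 in Hz. lra. Qed.

Lemma is_derive_Cinv (g : R -> C) x dg :
  is_derive g x dg -> g x <> RtoC 0 ->
  is_derive (fun t => Cinv (g t)) x (Copp (Cmult dg (Cinv (Cmult (g x) (g x))))).
Proof.
  intros Hg Hgx.
  set (N := fun t => Re (g t) ^ 2 + Im (g t) ^ 2).
  assert (HN0 : N x <> 0) by exact (Cnorm2_neq_0 _ Hgx).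
  assert (HN : is_derive N x (INR 2 * Re dg * Re (g x) ^ 1 + INR 2 * Im dg * Im (g x) ^ 1)).
  { apply (is_derive_plus (fun t => Re (g t) ^ 2) (fun t => Im (g t) ^ 2));
      apply (is_derive_pow (fun t => _)); [apply is_derive_Re | apply is_derive_Im]; exact Hg. }
  pose proof (is_derive_C_parts _ _ _ _ _
    (is_derive_div (fun t => Re (g t)) N x _ _ (is_derive_Re _ _ _ Hg) HN HN0)
    (is_derive_div (fun t => - Im (g t)) N x _ _
       (is_derive_opp _ _ _ (is_derive_Im _ _ _ Hg)) HN HN0)) as H.
  eapply is_derive_ext; [intros t; reflexivity | ].
  match goal with H : is_derive _ x ?l |- is_derive _ x ?l' => replace l' with l end.
  { exact H. }
  revert HN0. unfold N, Re, Im. destruct dg as [p q], (g x) as [r s]. simpl. intros HN0.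
  assert (HN1 : r * r + s * s <> 0) by (contradict HN0; rewrite <- HN0; ring).
  assert (HN2 : (r * r - s * s) * (r * r - s * s) + (r * s + s * r) * (r * s + s * r) <> 0).
  { replace (_ + _) with ((r * r + s * s) * (r * r + s * s)) by ring.
    now apply Rmult_integral_contrapositive. }
  unfold Copp, Cmult, Cinv, opp; simpl.
  f_equal; field; auto.
Qed.

Lemma is_derive_Cquot (f g : R -> C) x df dg :
  is_derive f x df -> is_derive g x dg -> g x <> RtoC 0 ->
  is_derive (fun t => Cmult (f t) (Cinv (g t))) x
    (Cmult (Cminus (Cmult df (g x)) (Cmult (f x) dg)) (Cinv (Cmult (g x) (g x)))).
Proof.
  intros Hf Hg Hgx.
  replace (Cmult (Cminus (Cmult df (g x)) (Cmult (f x) dg)) (Cinv (Cmult (g x) (g x)))) with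
    (Cplus (Cmult df (Cinv (g x))) (Cmult (f x) (Copp (Cmult dg (Cinv (Cmult (g x) (g x)))))))
    by (field; exact Hgx).
  apply is_derive_Cmult; [exact Hf | apply is_derive_Cinv; assumption].
Qed.

Lemma is_derive_Cplus (f g : R -> C) x df dg :
  is_derive f x df -> is_derive g x dg ->
  is_derive (fun t => Cplus (f t) (g t)) x (Cplus df dg).
Proof. intros; apply (is_derive_plus (V := C_R_NormedModule) f g); auto. Qed.

Lemma is_derive_Cminus (f g : R -> C) x df dg :
  is_derive f x df -> is_derive g x dg ->
  is_derive (fun t => Cminus (f t) (g t)) x (Cminus df dg).
Proof. intros; apply (is_derive_minus (V := C_R_NormedModule) f g); auto. Qed.

Lemma is_derive_Cconst (k : C) (x : R) : is_derive (fun _ : R => k) x (RtoC 0).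
Proof. exact (is_derive_const (V := C_R_NormedModule) k x). Qed.

Lemma is_derive_Cscal (k : C) (f : R -> C) x df :
  is_derive f x df -> is_derive (fun t => Cmult k (f t)) x (Cmult k df).
Proof.
  intros H. replace (Cmult k df) with (Cplus (Cmult (RtoC 0) (f x)) (Cmult k df)) by ring.
  apply (is_derive_Cmult (fun _ => k) f); [apply is_derive_Cconst | exact H].
Qed.

Lemma continuous_C_parts (fr fi : R -> R) x :
  continuous fr x -> continuous fi x -> continuous (fun t => (fr t, fi t) : C) x.
Proof.
  intros Hr Hi.
  apply (continuous_comp_2 (X := C_UniformSpace) fr fi (fun u v => (u, v) : C)); auto.
  apply (continuous_ext (U := C_UniformSpace) (fun p : R * R => p)).
  - intros [u v]; reflexivity.
  - apply continuous_id.
Qed.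

Lemma continuous_Re (f : R -> C) x : continuous f x -> continuous (fun t => Re (f t)) x.
Proof. intros H. apply (continuous_comp f fst); [exact H | apply continuous_fst]. Qed.

Lemma continuous_Im (f : R -> C) x : continuous f x -> continuous (fun t => Im (f t)) x.
Proof. intros H. apply (continuous_comp f snd); [exact H | apply continuous_snd]. Qed.

Lemma continuous_Cmult (f g : R -> C) x :
  continuous f x -> continuous g x -> continuous (fun t => Cmult (f t) (g t)) x.
Proof.
  intros Hf Hg.
  pose proof (continuous_Re _ _ Hf). pose proof (continuous_Im _ _ Hf).
  pose proof (continuous_Re _ _ Hg). pose proof (continuous_Im _ _ Hg).
  apply (continuous_ext (fun t => (Re (f t) * Re (g t) - Im (f t) * Im (g t),
                                  Re (f t) * Im (g t) + Im (f t) * Re (g t)) : C)).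
  { intros t; reflexivity. }
  apply continuous_C_parts.
  - apply (continuous_minus (fun t => Re (f t) * Re (g t)) (fun t => Im (f t) * Im (g t)));
      apply (continuous_mult (K := R_AbsRing) (fun t => _ (f t)) (fun t => _ (g t))); auto.
  - apply (continuous_plus (fun t => Re (f t) * Im (g t)) (fun t => Im (f t) * Re (g t)));
      apply (continuous_mult (K := R_AbsRing) (fun t => _ (f t)) (fun t => _ (g t))); auto.
Qed.

Lemma continuous_Cinv (g : R -> C) x :
  continuous g x -> g x <> RtoC 0 -> continuous (fun t => Cinv (g t)) x.
Proof.
  intros Hg Hgx.
  pose proof (continuous_Re _ _ Hg) as Hr. pose proof (continuous_Im _ _ Hg) as Hi.
  set (N := fun t => Re (g t) ^ 2 + Im (g t) ^ 2).
  assert (HN : continuous (fun t => / N t) x).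
  { apply continuous_Rinv_comp; [| exact (Cnorm2_neq_0 _ Hgx)].
    apply (continuous_plus (fun t => Re (g t) ^ 2) (fun t => Im (g t) ^ 2)).
    - apply (continuous_ext (fun t => Re (g t) * (Re (g t) * 1))); [reflexivity |].
      repeat apply (continuous_mult (K := R_AbsRing)); auto using continuous_const.
    - apply (continuous_ext (fun t => Im (g t) * (Im (g t) * 1))); [reflexivity |].
      repeat apply (continuous_mult (K := R_AbsRing)); auto using continuous_const. }
  apply (continuous_ext (fun t => (Re (g t) * / N t, - Im (g t) * / N t) : C)).
  { intros t; reflexivity. }
  apply continuous_C_parts; apply (continuous_mult (K := R_AbsRing)); auto.
  apply (continuous_opp (fun t => Im (g t))); auto.
Qed.

Lemma continuous_Cminus (f g : R -> C) x :
  continuous f x -> continuous g x -> continuous (fun t => Cminus (f t) (g t)) x.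
Proof. intros; apply (continuous_minus (V := C_R_NormedModule) f g); auto. Qed.

Lemma const_of_is_derive_0_R (h : R -> R) x :
  (forall y, Rmin 0 x <= y <= Rmax 0 x -> continuous h y) ->
  (forall y, Rmin 0 x < y < Rmax 0 x -> is_derive h y 0) -> h x = h 0.
Proof.
  intros Hc Hd.
  destruct (MVT_gen h 0 x (fun _ => 0)) as [y [_ Hy]].
  - exact Hd.
  - intros y Hy. apply continuity_pt_filterlim. exact (Hc y Hy).
  - lra.
Qed.

Lemma const_of_is_derive_0 (h : R -> C) x :
  (forall y, Rmin 0 x <= y <= Rmax 0 x -> continuous h y) ->
  (forall y, Rmin 0 x < y < Rmax 0 x -> is_derive h y (RtoC 0)) -> h x = h 0.
Proof.
  intros Hc Hd.
  assert (Hre : Re (h x) = Re (h 0)).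
  { apply (const_of_is_derive_0_R (fun t => Re (h t))).
    - intros y Hy. apply continuous_Re. auto.
    - intros y Hy. apply (is_derive_Re h y (RtoC 0)). auto. }
  assert (Him : Im (h x) = Im (h 0)).
  { apply (const_of_is_derive_0_R (fun t => Im (h t))).
    - intros y Hy. apply continuous_Im. auto.
    - intros y Hy. apply (is_derive_Im h y (RtoC 0)). auto. }
  destruct (h x), (h 0). simpl in *. congruence.
Qed.

Lemma Icc_of_Ioo a x : Ioo a x -> Icc a x.
Proof. unfold Icc, Ioo. lra. Qed.

Lemma const_on_Icc a (h : R -> C) :
  (forall y, Icc a y -> continuous h y) ->
  (forall y, Ioo a y -> is_derive h y (RtoC 0)) ->
  forall x, Icc a x -> h x = h 0.
Proof.
  intros Hc Hd x Hx.
  apply const_of_is_derive_0; intros y Hy; [apply Hc | apply Hd];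
    revert Hx Hy; unfold Icc, Ioo, Rmin, Rmax; destruct Rle_dec; lra.
Qed.

Lemma eq_on_Icc_of_is_derive a (f g df dg : R -> C) :
  (forall y, Icc a y -> is_derive f y (df y)) ->
  (forall y, Icc a y -> is_derive g y (dg y)) ->
  (forall y, Icc a y -> df y = dg y) -> f 0 = g 0 ->
  forall x, Icc a x -> f x = g x.
Proof.
  intros Hf Hg Hd H0 x Hx.
  assert (E : Cminus (f x) (g x) = Cminus (f 0) (g 0)).
  { apply (const_on_Icc a (fun t => Cminus (f t) (g t))); auto.
    - intros y Hy. apply (ex_derive_continuous (V := C_R_NormedModule)).
      eexists. apply is_derive_Cminus; auto.
    - intros y Hy. pose proof (Icc_of_Ioo a y Hy) as Hy'.
      replace (RtoC 0) with (Cminus (df y) (dg y)) by (rewrite Hd; auto; ring).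
      apply is_derive_Cminus; auto. }
  rewrite H0 in E. apply Ceq_minus. rewrite E. ring.
Qed.

(* [f] is only controlled on [-a, a]; extending it by constants makes it continuous on the
   whole line, so the fundamental theorem of calculus applies up to the endpoints, while
   the recursive integrals on [-a, a] are unchanged ([phi_extend_Icc]). *)
Definition clamp (a x : R) : R := Rmax (- a) (Rmin a x).

Definition extend_Icc (a : R) (F : R -> C) (x : R) : C := F (clamp a x).

Lemma clamp_Icc a x : 0 < a -> Icc a (clamp a x).
Proof. intros Ha. unfold Icc, clamp, Rmax, Rmin. repeat destruct Rle_dec; lra. Qed.

Lemma clamp_id a x : Icc a x -> clamp a x = x.
Proof. unfold Icc, clamp, Rmax, Rmin. intros H. repeat destruct Rle_dec; lra. Qed.

Lemma clamp_locally_id a x : Ioo a x -> locally x (fun t => clamp a t = t).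
Proof.
  intros [H1 H2].
  assert (He : 0 < Rmin (x + a) (a - x)) by (apply Rmin_pos; lra).
  exists (mkposreal _ He). intros y Hy. apply clamp_id.
  change (Rabs (y - x) < Rmin (x + a) (a - x)) in Hy.
  pose proof (Rmin_l (x + a) (a - x)). pose proof (Rmin_r (x + a) (a - x)).
  apply Rabs_def2 in Hy. unfold Icc. lra.
Qed.

Lemma continuous_clamp a x : continuous (clamp a) x.
Proof.
  apply filterlim_locally. intros eps. exists eps. intros y Hy.
  change (Rabs (clamp a y - clamp a x) < eps).
  change (Rabs (y - x) < eps) in Hy.
  eapply Rle_lt_trans; [| exact Hy].
  unfold clamp, Rmax, Rmin.
  repeat destruct Rle_dec; unfold Rabs; repeat destruct Rcase_abs; lra.
Qed.

Lemma extend_Icc_id a F x : Icc a x -> extend_Icc a F x = F x.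
Proof. intros Hx. unfold extend_Icc. now rewrite clamp_id. Qed.

Lemma extend_Icc_neq_0 a F x : 0 < a ->
  (forall y, Icc a y -> F y <> RtoC 0) -> extend_Icc a F x <> RtoC 0.
Proof. intros Ha HF. apply HF, clamp_Icc, Ha. Qed.

Lemma continuous_extend_Icc a F x : 0 < a -> cont_on_Icc a F -> continuous (extend_Icc a F) x.
Proof.
  intros Ha HF.
  apply (filterlim_comp _ _ _ (clamp a) F _ (within (Icc a) (locally (clamp a x)))).
  - intros P HP. pose proof (continuous_clamp a x _ HP) as H. unfold filtermap in *.
    revert H. apply filter_imp. intros t Ht. apply Ht, clamp_Icc, Ha.
  - apply HF, clamp_Icc, Ha.
Qed.

Lemma is_derive_extend_Icc a (F : R -> C) x l :
  Ioo a x -> is_derive F x l -> is_derive (extend_Icc a F) x l.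
Proof.
  intros Hx HF. apply (is_derive_ext_loc F); [| exact HF].
  apply (filter_imp (fun t => clamp a t = t)); [| now apply clamp_locally_id].
  intros t Ht. unfold extend_Icc. now rewrite Ht.
Qed.

(** * The recursive integrals *)

Lemma is_derive_RInt_0 (h : R -> C) x : (forall y, continuous h y) ->
  is_derive (fun t => RInt (V := C_R_CompleteNormedModule) h 0 t) x (h x).
Proof.
  intros Hc. apply (is_derive_RInt (V := C_R_NormedModule) h _ 0); [| apply Hc].
  apply filter_forall. intros b. apply (RInt_correct (V := C_R_CompleteNormedModule)).
  apply ex_RInt_continuous. intros; apply Hc.
Qed.

Lemma Xrec_S_0 (F : R -> C) b m : Xrec F b (S m) 0 = RtoC 0.
Proof. simpl Xrec. rewrite RInt_point. apply Cmult_0_r. Qed.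

Lemma Xrec_eq_on_Icc a (F G : R -> C) b n x :
  (forall y, Icc a y -> F y = G y) -> Icc a x -> Xrec F b n x = Xrec G b n x.
Proof.
  intros HFG. revert x. induction n as [|m IH]; intros x Hx; [reflexivity |].
  simpl Xrec. f_equal. apply RInt_ext. intros y Hy.
  assert (Hy' : Icc a y) by (revert Hx Hy; unfold Icc, Rmin, Rmax; destruct Rle_dec; lra).
  unfold wpow. rewrite IH, HFG; auto.
Qed.

Lemma phi_extend_Icc a (F : R -> C) k x : Icc a x -> phi F k x = phi (extend_Icc a F) k x.
Proof.
  intros Hx. unfold phi. rewrite (extend_Icc_id a F x Hx). f_equal.
  apply (Xrec_eq_on_Icc a); [intros y Hy; symmetry; now apply extend_Icc_id | exact Hx].
Qed.

(* [Xphi F n] is [X^(n)] for odd [n] and [\tilde X^(n)] for even [n], so that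
   [phi F n = F * Xphi F n]; [Xpsi F n] is the other one of the two. *)
Definition Xphi (F : R -> C) (n : nat) : R -> C := Xrec F (Nat.even n) n.
Definition Xpsi (F : R -> C) (n : nat) : R -> C := Xrec F (Nat.odd n) n.

Section RecursiveIntegrals.

Variable F : R -> C.
Hypothesis F_cont : forall y, continuous F y.
Hypothesis F_neq_0 : forall y, F y <> RtoC 0.

Lemma continuous_wpow n y : continuous (wpow F n) y.
Proof.
  unfold wpow. destruct (Nat.even n).
  - apply continuous_Cmult; auto.
  - apply (continuous_Cinv (fun s => Cmult (F s) (F s))).
    + apply continuous_Cmult; auto.
    + apply Cmult_neq_0; auto.
Qed.

Lemma is_derive_Xrec_S b m y :
  (forall z, continuous (Xrec F b m) z) ->
  is_derive (Xrec F b (S m)) y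
    (Cmult (RtoC (INR (S m))) (Cmult (Xrec F b m y) (wpow F (if b then m else S m) y))).
Proof.
  intros HX. apply is_derive_Cscal, is_derive_RInt_0.
  intros z. apply continuous_Cmult; [apply HX | apply continuous_wpow].
Qed.

Lemma continuous_Xrec b n y : continuous (Xrec F b n) y.
Proof.
  revert y. induction n as [|m IH]; intros y; [apply continuous_const |].
  apply (ex_derive_continuous (V := C_R_NormedModule)).
  eexists. apply is_derive_Xrec_S, IH.
Qed.

Lemma is_derive_Xphi_S m y :
  is_derive (Xphi F (S m)) y
    (Cmult (RtoC (INR (S m))) (Cmult (Xpsi F m y) (Cinv (Cmult (F y) (F y))))).
Proof.
  pose proof (is_derive_Xrec_S (Nat.even (S m)) m y (continuous_Xrec _ m)) as H.
  unfold Xphi, Xpsi. unfold wpow in H. rewrite Nat.even_succ in *.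
  destruct (Nat.odd m) eqn:Hm.
  - rewrite <- Nat.negb_odd, Hm in H. exact H.
  - rewrite Nat.even_succ, Hm in H. exact H.
Qed.

Lemma is_derive_Xpsi_S m y :
  is_derive (Xpsi F (S m)) y
    (Cmult (RtoC (INR (S m))) (Cmult (Xphi F m y) (Cmult (F y) (F y)))).
Proof.
  pose proof (is_derive_Xrec_S (Nat.odd (S m)) m y (continuous_Xrec _ m)) as H.
  unfold Xphi, Xpsi. unfold wpow in H. rewrite Nat.odd_succ in *.
  destruct (Nat.even m) eqn:Hm.
  - rewrite Hm in H. exact H.
  - rewrite Nat.even_succ, <- Nat.negb_even, Hm in H. exact H.
Qed.

End RecursiveIntegrals.

(** * Transfer of the recursive integrals from [g] to [f] *)

(* Since [Xphi G 1 y = \int_0^y G^{-2}], this is the factor [u] of reduction of order. *)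
Definition reduction_factor (G : R -> C) (c : C) (y : R) : C :=
  Cplus (RtoC 1) (Cmult c (Xphi G 1 y)).

Lemma reduction_factor_0 G c : reduction_factor G c 0 = RtoC 1.
Proof. unfold reduction_factor, Xphi. rewrite Xrec_S_0. ring. Qed.

Lemma is_derive_reduction_factor (G : R -> C) c y :
  (forall z, continuous G z) -> (forall z, G z <> RtoC 0) ->
  is_derive (reduction_factor G c) y (Cmult c (Cinv (Cmult (G y) (G y)))).
Proof.
  intros HG HG0.
  replace (Cmult c (Cinv (Cmult (G y) (G y)))) with
    (Cplus (RtoC 0) (Cmult c (Cmult (RtoC (INR 1)) (Cmult (Xpsi G 0 y) (Cinv (Cmult (G y) (G y)))))))
    by (change (Xpsi G 0 y) with (RtoC 1); change (INR 1) with 1; ring).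
  apply is_derive_Cplus; [apply is_derive_Cconst |].
  apply is_derive_Cscal, is_derive_Xphi_S; auto.
Qed.

Lemma INR_S_neq_0 n : RtoC (INR (S n)) <> RtoC 0.
Proof. intros E. apply RtoC_inj in E. pose proof (lt_0_INR (S n) (Nat.lt_0_succ n)). lra. Qed.

Definition Xphi_transfer (F G : R -> C) (c : C) (n : nat) (y : R) : Prop :=
  if Nat.even n then
    Xphi F n y = Cmult (Cplus (Xphi G n y) (Cmult (Cdiv c (RtoC (INR (S n)))) (Xphi G (S n) y)))
                       (Cinv (reduction_factor G c y))
  else Xphi F n y = Cmult (Xphi G n y) (Cinv (reduction_factor G c y)).

Definition Xpsi_transfer (F G : R -> C) (c : C) (n : nat) (y : R) : Prop :=
  if Nat.even n then
    Xpsi F n y = Cminus (Cmult (reduction_factor G c y) (Xpsi G n y))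
                        (Cmult (Cdiv c (RtoC (INR (S n)))) (Xphi G (S n) y))
  else
    Xpsi F n y =
      Cminus (Cminus (Cmult (reduction_factor G c y)
                        (Cplus (Xpsi G n y) (Cmult (Cdiv c (RtoC (INR (S n)))) (Xpsi G (S n) y))))
                     (Cmult (Cdiv c (RtoC (INR (S n)))) (Xphi G (S n) y)))
             (Cmult (Cdiv (Cmult c c) (Cmult (RtoC (INR (S n))) (RtoC (INR (S (S n))))))
                    (Xphi G (S (S n)) y)).

Section Transfer.

Variables (a : R) (F G : R -> C) (c : C).
Hypothesis F_cont : forall y, continuous F y.
Hypothesis G_cont : forall y, continuous G y.
Hypothesis F_neq_0 : forall y, F y <> RtoC 0.
Hypothesis G_neq_0 : forall y, G y <> RtoC 0.
Hypothesis F_eq : forall y, Icc a y -> F y = Cmult (G y) (reduction_factor G c y).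

Lemma reduction_factor_neq_0 y : Icc a y -> reduction_factor G c y <> RtoC 0.
Proof. intros Hy E. apply (F_neq_0 y). rewrite F_eq, E by exact Hy. ring. Qed.

Ltac field_transfer :=
  field; repeat split; first [assumption | apply INR_S_neq_0].

Ltac solve_is_derive :=
  match goal with
  | |- is_derive (fun t => Cminus (@?f t) (@?g t)) _ _ =>
      apply (is_derive_Cminus f g); solve_is_derive
  | |- is_derive (fun t => Cplus (@?f t) (@?g t)) _ _ =>
      apply (is_derive_Cplus f g); solve_is_derive
  | |- is_derive (fun t => Cmult (@?f t) (@?g t)) _ _ =>
      apply (is_derive_Cmult f g); solve_is_derive
  | |- is_derive (fun t => Cinv (@?f t)) _ _ =>
      apply (is_derive_Cinv f); [solve_is_derive | apply reduction_factor_neq_0; assumption]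
  | |- is_derive (fun t => reduction_factor G c t) _ _ => apply is_derive_reduction_factor; auto
  | |- is_derive (fun t => Xphi _ (S _) t) _ _ => apply is_derive_Xphi_S; auto
  | |- is_derive (fun t => Xpsi _ (S _) t) _ _ => apply is_derive_Xpsi_S; auto
  | |- is_derive (fun _ => ?k) _ _ => apply (is_derive_Cconst k)
  end.

Ltac transfer_step is_derive_lhs IH Hm :=
  eapply eq_on_Icc_of_is_derive;
  [ intros y Hy; apply is_derive_lhs; auto
  | intros y Hy; solve_is_derive
  | intros y Hy; cbv beta; pose proof (IH y Hy) as W;
    unfold Xphi_transfer, Xpsi_transfer in W; rewrite Hm in W; rewrite W, (F_eq y Hy);
    pose proof (reduction_factor_neq_0 y Hy); pose proof (G_neq_0 y); field_transfer
  | unfold Xphi, Xpsi; rewrite !Xrec_S_0; ring ].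

Lemma Xphi_transfer_S m :
  (forall y, Icc a y -> Xpsi_transfer F G c m y) ->
  forall y, Icc a y -> Xphi_transfer F G c (S m) y.
Proof.
  intros IH. unfold Xphi_transfer. rewrite Nat.even_succ, <- Nat.negb_even.
  destruct (Nat.even m) eqn:Hm; simpl negb; cbv iota; transfer_step is_derive_Xphi_S IH Hm.
Qed.

Lemma Xpsi_transfer_S m :
  (forall y, Icc a y -> Xphi_transfer F G c m y) ->
  forall y, Icc a y -> Xpsi_transfer F G c (S m) y.
Proof.
  intros IH. unfold Xpsi_transfer. rewrite Nat.even_succ, <- Nat.negb_even.
  destruct (Nat.even m) eqn:Hm; simpl negb; cbv iota; transfer_step is_derive_Xpsi_S IH Hm.
Qed.

Lemma Xphi_Xpsi_transfer n :
  (forall y, Icc a y -> Xphi_transfer F G c n y) /\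
  (forall y, Icc a y -> Xpsi_transfer F G c n y).
Proof.
  induction n as [|m [IHphi IHpsi]].
  - split; intros y Hy; unfold Xphi_transfer, Xpsi_transfer; simpl Nat.even; cbv iota;
      change (Xphi F 0 y) with (RtoC 1); change (Xpsi F 0 y) with (RtoC 1);
      change (Xphi G 0 y) with (RtoC 1); change (Xpsi G 0 y) with (RtoC 1);
      change (INR 1) with 1; pose proof (reduction_factor_neq_0 y Hy) as Hu;
      unfold reduction_factor in *; field; exact Hu.
  - split; [apply Xphi_transfer_S | apply Xpsi_transfer_S]; assumption.
Qed.

Lemma phi_transfer_odd k x : Nat.odd k = true -> Icc a x -> phi F k x = phi G k x.
Proof.
  intros Hk Hx. pose proof (proj1 (Xphi_Xpsi_transfer k) x Hx) as E.
  unfold Xphi_transfer in E. rewrite <- Nat.negb_odd, Hk in E. simpl negb in E. cbv iota in E.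
  unfold phi. fold (Xphi F k) (Xphi G k). rewrite E, (F_eq x Hx).
  pose proof (reduction_factor_neq_0 x Hx). field. auto.
Qed.

Lemma phi_transfer_even k x : Nat.even k = true -> Icc a x ->
  phi F k x = Cplus (phi G k x) (Cmult (Cdiv c (RtoC (INR (k + 1)))) (phi G (k + 1) x)).
Proof.
  intros Hk Hx. pose proof (proj1 (Xphi_Xpsi_transfer k) x Hx) as E.
  unfold Xphi_transfer in E. rewrite Hk in E. cbv iota in E.
  unfold phi. rewrite Nat.add_1_r. fold (Xphi F k) (Xphi G k) (Xphi G (S k)).
  rewrite E, (F_eq x Hx).
  pose proof (reduction_factor_neq_0 x Hx). pose proof (INR_S_neq_0 k). field. auto.
Qed.

End Transfer.

(** * Reduction of order *)

Lemma wronskian_const a (q f f1 f2 g g1 g2 : R -> C) :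
  0 < a -> C2_C1 a f f1 f2 -> C2_C1 a g g1 g2 ->
  (forall x, Ioo a x -> f2 x = Cmult (q x) (f x)) ->
  (forall x, Ioo a x -> g2 x = Cmult (q x) (g x)) ->
  forall y, Icc a y ->
    Cminus (Cmult (f1 y) (g y)) (Cmult (f y) (g1 y)) =
    Cminus (Cmult (f1 0) (g 0)) (Cmult (f 0) (g1 0)).
Proof.
  intros Ha [Hf [Hf1 [Hdf [Hdf1 _]]]] [Hg [Hg1 [Hdg [Hdg1 _]]]] Hf2 Hg2 y Hy.
  assert (I0 : Icc a 0) by (unfold Icc; lra).
  rewrite <- !(extend_Icc_id a f), <- !(extend_Icc_id a f1),
          <- !(extend_Icc_id a g), <- !(extend_Icc_id a g1) by assumption.
  apply (const_on_Icc a (fun t => Cminus (Cmult (extend_Icc a f1 t) (extend_Icc a g t))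
                                        (Cmult (extend_Icc a f t) (extend_Icc a g1 t)))); auto.
  - intros t _. apply continuous_Cminus; apply continuous_Cmult;
      apply continuous_extend_Icc; assumption.
  - intros t Ht. pose proof (Icc_of_Ioo a t Ht) as Ht'.
    replace (RtoC 0) with
      (Cminus (Cplus (Cmult (f2 t) (extend_Icc a g t)) (Cmult (extend_Icc a f1 t) (g1 t)))
              (Cplus (Cmult (f1 t) (extend_Icc a g1 t)) (Cmult (extend_Icc a f t) (g2 t)))).
    + apply is_derive_Cminus; apply is_derive_Cmult; apply is_derive_extend_Icc; auto.
    + rewrite !extend_Icc_id, Hf2, Hg2 by assumption. ring.
Qed.

Lemma eq_mul_reduction_factor a (q f f1 f2 g g1 g2 : R -> C) :
  0 < a -> C2_C1 a f f1 f2 -> C2_C1 a g g1 g2 ->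
  (forall x, Ioo a x -> f2 x = Cmult (q x) (f x)) ->
  (forall x, Ioo a x -> g2 x = Cmult (q x) (g x)) ->
  (forall x, Icc a x -> g x <> RtoC 0) ->
  f 0 = RtoC 1 -> g 0 = RtoC 1 ->
  forall y, Icc a y ->
    extend_Icc a f y =
    Cmult (extend_Icc a g y) (reduction_factor (extend_Icc a g) (Cminus (f1 0) (g1 0)) y).
Proof.
  intros Ha Hf Hg Hf2 Hg2 Hg_neq_0 Hf0 Hg0.
  pose proof (wronskian_const a q f f1 f2 g g1 g2 Ha Hf Hg Hf2 Hg2) as HW.
  destruct Hf as [Hfc [_ [Hdf _]]], Hg as [Hgc [_ [Hdg _]]].
  set (F := extend_Icc a f). set (G := extend_Icc a g).
  set (u := reduction_factor G (Cminus (f1 0) (g1 0))).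
  assert (I0 : Icc a 0) by (unfold Icc; lra).
  assert (HG_cont : forall t, continuous G t) by (intros; now apply continuous_extend_Icc).
  assert (HG_neq_0 : forall t, G t <> RtoC 0) by (intros; now apply extend_Icc_neq_0).
  assert (Hu : forall t, is_derive u t (Cmult (Cminus (f1 0) (g1 0)) (Cinv (Cmult (G t) (G t)))))
    by (intros; now apply is_derive_reduction_factor).
  assert (E : forall y, Icc a y -> Cminus (Cmult (F y) (Cinv (G y))) (u y) = RtoC 0).
  { intros y Hy.
    rewrite (const_on_Icc a (fun t => Cminus (Cmult (F t) (Cinv (G t))) (u t))); auto.
    - unfold u. rewrite reduction_factor_0. unfold F, G. rewrite !extend_Icc_id, Hf0, Hg0 by auto.
      field.
    - intros t _. apply continuous_Cminus.
      + apply continuous_Cmult; [now apply continuous_extend_Icc |].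
        now apply continuous_Cinv.
      + apply (ex_derive_continuous (V := C_R_NormedModule)). eexists. apply Hu.
    - intros t Ht. pose proof (Icc_of_Ioo a t Ht) as Ht'.
      replace (RtoC 0) with
        (Cminus (Cmult (Cminus (Cmult (f1 t) (G t)) (Cmult (F t) (g1 t)))
                       (Cinv (Cmult (G t) (G t))))
                (Cmult (Cminus (f1 0) (g1 0)) (Cinv (Cmult (G t) (G t))))).
      + apply is_derive_Cminus; [apply is_derive_Cquot | apply Hu]; auto;
          apply is_derive_extend_Icc; auto.
      + unfold F, G. rewrite !extend_Icc_id, (HW t Ht'), Hf0, Hg0 by assumption. ring. }
  intros y Hy. pose proof (E y Hy) as Ey. apply Ceq_minus in Ey.
  pose proof (HG_neq_0 y). rewrite <- Ey. field. auto.
Qed.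

Theorem mainTheorem1 (a : R) (q f f1 f2 g g1 g2 : R -> C) :
  0 < a ->
  cont_on_Icc a q ->
  C2_C1 a f f1 f2 ->
  C2_C1 a g g1 g2 ->
  (forall x, Ioo a x -> f2 x = Cmult (q x) (f x)) ->
  (forall x, Ioo a x -> g2 x = Cmult (q x) (g x)) ->
  (forall x, Icc a x -> f x <> RtoC 0) ->
  (forall x, Icc a x -> g x <> RtoC 0) ->
  f 0 = RtoC 1 -> g 0 = RtoC 1 ->
  (forall k : nat, Nat.odd k = true ->
     forall x, Icc a x -> phi f k x = phi g k x) /\
  (forall k : nat, Nat.even k = true ->
     forall x, Icc a x ->
       phi f k x = Cplus (phi g k x)
         (Cmult (Cdiv (Cminus (f1 0) (g1 0)) (RtoC (INR (k + 1))))
                (phi g (k + 1) x))).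
Proof.
  intros Ha _ Hf Hg Hf2 Hg2 Hf_neq_0 Hg_neq_0 Hf0 Hg0.
  pose proof (eq_mul_reduction_factor a q f f1 f2 g g1 g2 Ha Hf Hg Hf2 Hg2 Hg_neq_0 Hf0 Hg0)
    as Hfg.
  assert (Hcont : forall h h1 h2, C2_C1 a h h1 h2 -> forall t, continuous (extend_Icc a h) t)
    by (intros h h1 h2 [Hh _] t; now apply continuous_extend_Icc).
  pose proof (Hcont f f1 f2 Hf) as HF. pose proof (Hcont g g1 g2 Hg) as HG.
  pose proof (fun t => extend_Icc_neq_0 a f t Ha Hf_neq_0) as HF0.
  pose proof (fun t => extend_Icc_neq_0 a g t Ha Hg_neq_0) as HG0.
  split.
  - intros k Hk x Hx. rewrite (phi_extend_Icc a f), (phi_extend_Icc a g) by exact Hx.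
    exact (phi_transfer_odd a _ _ _ HF HG HF0 HG0 Hfg k x Hk Hx).
  - intros k Hk x Hx. rewrite (phi_extend_Icc a f), (phi_extend_Icc a g k),
      (phi_extend_Icc a g (k + 1)%nat) by exact Hx.
    exact (phi_transfer_even a _ _ _ HF HG HF0 HG0 Hfg k x Hk Hx).
Qed.
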